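(* Let $r \ge 2$, $t \ge 2$ and $k \ge 1$ be integers, and let $G$ be a graph on $n$ vertices with $n > (r-1)(t-1)k$. Set $x = \lceil n/(r-1) \rceil$ and suppose $$\delta(G) \ge n - x + \left\lfloor \frac{x}{k+1} \right\rfloor$$ (equivalently, $\delta(G) \ge n - \lceil \frac{k}{k+1} x\rceil$). Suppose the edges of $G$ are coloured red and blue so that there is no blue path on $t$ vertices, and let $R$ be the spanning subgraph of $G$ formed by the red edges. Then the independence number of $R$ satisfies $\alpha(R) \le x-1$; that is, every set of $x$ vertices of $G$ contains two vertices joined by a red edge.
   Context: $\delta(G)$ is the minimum degree of $G$; $\alpha(R)$ is the maximum size of a set of pairwise non-adjacent vertices in $R$. A blue path on $t$ vertices means a path with $t$ vertices all of whose edges are blue edges of $G$. *)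

From mathcomp Require Import all_boot.
Set Implicit Arguments. Unset Strict Implicit. Unset Printing Implicit Defensive.

Definition simple_graph (T : finType) (G : rel T) : Prop :=
  symmetric G /\ irreflexive G.

Definition degree (T : finType) (G : rel T) (v : T) : nat := #|[set w | G v w]|.

(* minimum degree delta(G) (equals #|T| = 0 for the empty graph) *)
Definition min_degree (T : finType) (G : rel T) : nat :=
  \big[minn/#|T|]_(v : T) degree G v.

(* A red/blue colouring of the edges of G is given by the set of blue edges:
   a symmetric subrelation of G; the red edges are the remaining edges. *)
Definition blue_colouring (T : finType) (G blue : rel T) : Prop :=
  symmetric blue /\ subrel blue G.

Definition red_graph (T : finType) (G blue : rel T) : rel T :=
  fun u v => G u v && ~~ blue u v.

Definition has_path_on (T : finType) (E : rel T) (t : nat) : Prop :=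
  exists (v : T) (p : seq T), [/\ size p = t.-1, uniq (v :: p) & path E v p].

Definition independent (T : finType) (E : rel T) (S : {set T}) : bool :=
  [forall u in S, forall v in S, ~~ E u v].

Definition alpha (T : finType) (E : rel T) : nat :=
  \max_(S : {set T} | independent E S) #|S|.

(* Let S be a red-independent set with m >= x vertices. Every edge of G inside
   S is blue, so the blue graph on S has minimum degree at least
   d' = m - x + x %/ (k+1), and t <= 2 d' + 1. A longest blue path in S has
   fewer than t <= 2 d' + 1 vertices while each end has d' neighbours on it, so
   by Posa's rotation its vertex set carries a cycle and hence is closed under
   blue neighbours. Removing it and iterating splits S into c blue-closed parts
   of sizes in (d', t - 1]. If c <= k then m <= k (t - 1) < x; if c > k then
   m >= (k + 1) (d' + 1) > m. *)

From mathcomp Require Import all_boot zify.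
Set Implicit Arguments. Unset Strict Implicit. Unset Printing Implicit Defensive.

Section LongestPath.

Variables (T : finType) (E : rel T).
Hypotheses (Esym : symmetric E) (Eirr : irreflexive E).

Lemma cycle_cat_rev x l1 y r1 :
  path E x (l1 ++ y :: r1) -> E x y -> E (last y r1) (last x l1) ->
  cycle E ((y :: r1) ++ rev (x :: l1)).
Proof.
rewrite cat_path /= => /and3P[pl _ pr] Exy Eyx.
rewrite rcons_path cat_path pr /= last_cat rev_cons last_rcons Exy andbT.
rewrite -rev_cons (lastI x l1) rev_rcons /= Eyx /= rev_path.
by rewrite (@eq_path _ _ E) // => u v; rewrite Esym.
Qed.

(* Posa's rotation: by pigeonhole on positions some i has a ~ s_(i+1) and
   b ~ s_i, and then s_(i+1) ... b s_i ... a closes into a cycle. *)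
Lemma path_ends_cycle a q :
  path E a q ->
  size (a :: q) <= #|[set w in a :: q | E a w]| + #|[set w in a :: q | E (last a q) w]| ->
  exists2 c, perm_eq (a :: q) c & cycle E c.
Proof.
move=> Eaq deg_ends; set b := last a q; set m := size q.
pose IA := [set i : 'I_m | E a (nth a q i)].
pose IB := [set i : 'I_m | E b (nth a (a :: q) i)].
have IA_big : #|[set w in a :: q | E a w]| <= #|IA|.
  apply: leq_trans (leq_imset_card (fun i : 'I_m => nth a q i) IA).
  apply/subset_leq_card/subsetP => w; rewrite inE in_cons => /andP[/orP[/eqP wa|wq] Eaw].
    by rewrite wa Eirr in Eaw.
  have wm : index w q < m by rewrite index_mem.
  apply/imsetP; exists (Ordinal wm); last by rewrite /= nth_index.
  by rewrite inE /= nth_index.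
have IB_big : #|[set w in a :: q | E b w]| <= #|IB|.
  apply: leq_trans (leq_imset_card (fun i : 'I_m => nth a (a :: q) i) IB).
  apply/subset_leq_card/subsetP => w; rewrite inE => /andP[wq Ebw].
  have wm : index w (a :: q) < m.
    rewrite ltn_neqAle -ltnS index_mem wq andbT; apply: contraTneq Ebw => wi.
    by rewrite -(nth_index a wq) wi (nth_last a (a :: q)) Eirr.
  apply/imsetP; exists (Ordinal wm); last by rewrite /= nth_index.
  by rewrite inE /= nth_index.
have : 0 < #|IA :&: IB|.
  rewrite -(ltn_add2l #|IA :|: IB|) addn0 cardsUI.
  apply: leq_ltn_trans (max_card _) _; rewrite card_ord.
  exact: leq_trans deg_ends (leq_add IA_big IB_big).
rewrite card_gt0 => /set0Pn[i]; rewrite !inE => /andP[Eay Ebx].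
have [l1 [y [r1 [def_q size_l1]]]] : exists l1 y r1, q = l1 ++ y :: r1 /\ size l1 = i.
  exists (take i q), (nth a q i), (drop i.+1 q).
  by rewrite -drop_nth ?cat_take_drop ?size_takel // ltnW.
exists ((y :: r1) ++ rev (a :: l1)).
  by rewrite def_q -cat_cons perm_catC perm_cat2l perm_sym perm_rev.
apply: cycle_cat_rev; rewrite -?def_q //.
  by rewrite def_q nth_cat size_l1 ltnn subnn in Eay.
move: Ebx; rewrite /b def_q last_cat -cat_cons nth_cat /= size_l1 ltnS leqnn.
by rewrite -size_l1 (nth_last a (a :: l1)) Esym.
Qed.

Variables (U : {set T}) (d : nat).
Hypothesis U_deg : forall u, u \in U -> d <= #|[set w in U | E u w]|.

Definition upath_in (s : seq T) := [&& uniq s, sorted E s & all (mem U) s].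

Definition longest_upath_in (s : seq T) :=
  upath_in s /\ forall s', upath_in s' -> size s' <= size s.

Lemma exists_longest_upath_in : U != set0 -> exists a q, longest_upath_in (a :: q).
Proof.
case/set0Pn=> v vU.
pose P n := [exists s : n.-tuple T, upath_in s].
have P1 : P 1 by apply/existsP; exists [tuple v]; rewrite /upath_in /= vU.
have P_le n : P n -> n <= #|T|.
  by case/existsP=> s /and3P[s_uniq _ _]; rewrite -(size_tuple s) -(card_uniqP s_uniq) max_card.
have [n /existsP[[[|a q] /= /eqP sz_s] s_upath] n_max] := ex_maxnP (ex_intro _ 1 P1) P_le.
  by move: (n_max 1 P1); rewrite -sz_s.
exists a, q; split=> // s' s'_upath; rewrite /= sz_s; apply: n_max.
by apply/existsP; exists (in_tuple s').
Qed.

Lemma longest_upath_in_head_closed y s w :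
  longest_upath_in (y :: s) -> w \in U -> E y w -> w \in y :: s.
Proof.
case=> /and3P[ys_uniq ys_path ys_U] ys_max wU Eyw; apply/negPn/negP=> w_new.
have /ys_max : upath_in (w :: y :: s).
  apply/and3P; split; [by rewrite cons_uniq w_new | by rewrite /= Esym Eyw | by rewrite /= wU].
by rewrite ltnn.
Qed.

Lemma longest_upath_in_cycle_closed s c y w :
  longest_upath_in s -> perm_eq s c -> cycle E c ->
  y \in s -> w \in U -> E y w -> w \in s.
Proof.
move=> [/and3P[s_uniq _ s_U] s_max] perm_sc c_cycle ys wU Eyw.
have yc : y \in c by rewrite -(perm_mem perm_sc).
have [i s' rot_c] := rot_to yc.
have perm_ss' : perm_eq s (y :: s') by rewrite -rot_c perm_sym perm_rot perm_sym.
have ys'_longest : longest_upath_in (y :: s').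
  split=> [|s'' /s_max]; last by rewrite (perm_size perm_ss').
  apply/and3P; split; first by rewrite -(perm_uniq perm_ss').
    by move: c_cycle; rewrite -(rot_cycle i) rot_c /= rcons_path => /andP[].
  by rewrite -(perm_all _ perm_ss').
by rewrite (perm_mem perm_ss') (longest_upath_in_head_closed ys'_longest).
Qed.

Lemma longest_upath_in_rev s : longest_upath_in s -> longest_upath_in (rev s).
Proof.
case=> /and3P[s_uniq s_sorted s_U] s_max; split=> [|s' /s_max]; last by rewrite size_rev.
rewrite /upath_in rev_uniq all_rev s_uniq s_U rev_sorted andbT /=.
by rewrite (@eq_sorted _ _ E) // => u v; rewrite Esym.
Qed.

Lemma longest_upath_in_head_degree v s :
  longest_upath_in (v :: s) -> d <= #|[set w in v :: s | E v w]|.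
Proof.
move=> vs_longest; have [/and3P[_ _ /andP[vU _]] _] := vs_longest.
apply: leq_trans (U_deg vU) (subset_leq_card _); apply/subsetP=> w.
by rewrite !in_set => /andP[wU Evw]; rewrite Evw (longest_upath_in_head_closed vs_longest).
Qed.

Lemma longest_upath_in_closed a q :
  longest_upath_in (a :: q) -> size (a :: q) <= d.*2 ->
  forall y w, y \in a :: q -> w \in U -> E y w -> w \in a :: q.
Proof.
move=> aq_longest aq_short.
have b_longest : longest_upath_in (last a q :: rev (belast a q)).
  by rewrite -rev_rcons -lastI; apply: longest_upath_in_rev.
have deg_b : d <= #|[set w in a :: q | E (last a q) w]|.
  apply: leq_trans (longest_upath_in_head_degree b_longest) (eq_leq (eq_card _)) => w.
  by rewrite !in_set -rev_rcons -lastI mem_rev.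
have [c perm_c c_cycle] : exists2 c, perm_eq (a :: q) c & cycle E c.
  apply: path_ends_cycle; first by case: aq_longest => /and3P[].
  rewrite (leq_trans aq_short) // -addnn leq_add //.
  exact: longest_upath_in_head_degree.
by move=> y w; apply: longest_upath_in_cycle_closed c_cycle.
Qed.

Lemma exists_closed_component t :
  U != set0 -> t <= d.*2.+1 -> (forall s, uniq s -> sorted E s -> size s < t) ->
  exists C : {set T}, [/\ C \subset U, d < #|C| < t &
    forall y w, y \in C -> w \in U -> E y w -> w \in C].
Proof.
move=> U_n0 t_le no_long_path.
have [a [q aq_longest]] := exists_longest_upath_in U_n0.
have [/and3P[aq_uniq aq_sorted aq_U] _] := aq_longest.
have aq_short := no_long_path _ aq_uniq aq_sorted.
exists [set w in a :: q]; split.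
- by apply/subsetP=> w; rewrite inE => /(allP aq_U).
- have card_aq : #|[set w in a :: q]| = size (a :: q).
    by rewrite cardsE (card_uniqP aq_uniq).
  rewrite card_aq aq_short andbT -card_aq.
  apply: leq_ltn_trans (longest_upath_in_head_degree aq_longest) _.
  apply: proper_card; apply/properP; split.
    by apply/subsetP=> w; rewrite !in_set => /andP[].
  by exists a; rewrite !in_set ?mem_head ?Eirr ?andbF.
- move=> y w; rewrite !inE; apply: longest_upath_in_closed => //.
  by rewrite -ltnS (leq_trans aq_short).
Qed.

End LongestPath.

Lemma closed_components_card (T : finType) (E : rel T) d t :
  symmetric E -> irreflexive E -> t <= d.*2.+1 ->
  (forall s, uniq s -> sorted E s -> size s < t) ->
  forall U : {set T}, (forall u, u \in U -> d <= #|[set w in U | E u w]|) ->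
  exists c, c * d.+1 <= #|U| <= c * t.-1.
Proof.
move=> Esym Eirr t_le no_long_path U.
have [N] := ubnP #|U|; elim: N U => // N IH U /ltnSE U_small U_deg.
have [->|U_n0] := eqVneq U set0; first by exists 0; rewrite cards0.
have [C [CU /andP[C_big C_small] C_closed]] :=
  exists_closed_component Esym Eirr U_deg U_n0 t_le no_long_path.
have rest_deg u : u \in U :\: C -> d <= #|[set w in U :\: C | E u w]|.
  rewrite in_setD => /andP[uC uU]; apply: leq_trans (U_deg u uU) (subset_leq_card _).
  apply/subsetP=> w; rewrite !in_set => /andP[wU Euw]; rewrite wU Euw andbT.
  by rewrite andbT; apply: contraNN uC => wC; apply: C_closed wC uU _; rewrite Esym.
have C_le := subset_leq_card CU.
have [|c] := IH (U :\: C) _ rest_deg; rewrite cardsDS //; first lia.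
by exists c.+1; rewrite !mulSn; lia.
Qed.

Lemma no_path_on_uniq_sorted (T : finType) (E : rel T) t :
  0 < t -> ~ has_path_on E t -> forall s : seq T, uniq s -> sorted E s -> size s < t.
Proof.
move=> t_gt0 no_path [//|v s] vs_uniq vs_sorted; rewrite ltnNge; apply/negP=> t_le.
apply: no_path; exists v, (take t.-1 s); split.
- by rewrite size_takel // -ltnS prednK.
- by move: (take_uniq t vs_uniq); rewrite -{1}(prednK t_gt0).
- by move: vs_sorted; rewrite /= -{1}(cat_take_drop t.-1 s) cat_path => /andP[].
Qed.

Lemma min_degree_le (T : finType) (G : rel T) (v : T) : min_degree G <= degree G v.
Proof.
rewrite /min_degree; have : v \in index_enum T by rewrite mem_index_enum.
elim: (index_enum T) => [//|u s IH]; rewrite big_cons in_cons.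
by case/orP=> [/eqP<-|/IH]; [apply: geq_minl | apply: leq_trans (geq_minr _ _)].
Qed.

(* Inside a red-independent set every edge of [G] is blue. *)
Lemma red_independent_blue_degree (T : finType) (G blue : rel T) (S : {set T}) u :
  independent (red_graph G blue) S -> u \in S ->
  #|S| + min_degree G <= #|T| + #|[set w in S | blue u w]|.
Proof.
move=> /forall_inP/(_ u) S_indep uS.
rewrite -(cardsC S) -addnA leq_add2l addnC.
apply: leq_trans (min_degree_le G u) (leq_trans _ (leq_card_setU _ _)).
apply/subset_leq_card/subsetP=> w; rewrite !in_set => Guw.
case wS: (w \in S) => //=; move/forall_inP: (S_indep uS) => /(_ w wS).
by rewrite /red_graph Guw negbK orbF.
Qed.

Lemma leq_mul_ceil_div n m : 0 < m -> n <= (n + m - 1) %/ m * m.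
Proof. by move=> m_gt0; have := ltn_ceil (n + m - 1) m_gt0; rewrite mulSn; lia. Qed.

Lemma leq_doubleS_div x k t : 0 < k -> (t - 1) * k < x -> t <= (x %/ k.+1).*2.+1.
Proof.
move=> k_gt0 tk_lt; have := ltn_ceil x (ltn0Sn k); move: (x %/ k.+1) => d x_lt.
rewrite leqNgt -addnn; apply/negP=> t_big.
have : (d + d + 1) * k <= (t - 1) * k by apply: leq_mul => //; lia.
nia.
Qed.

(* [m] vertices cannot split into [c] parts of sizes in
   [(m - x + x %/ k.+1).+1, t - 1]: at most [k] parts hold fewer than [x]
   vertices, and [k.+1] parts already hold more than [m - x + x] of them. *)
Lemma no_component_count x k t m c :
  (t - 1) * k < x -> x <= m -> c * (m - x + x %/ k.+1).+1 <= m <= c * (t - 1) -> False.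
Proof.
move=> tk_lt x_le /andP[m_ge m_le]; have := ltn_ceil x (ltn0Sn k).
have [c_le|c_gt] := leqP c k; first by have := leq_mul c_le (leqnn (t - 1)); nia.
have := leq_mul c_gt (leqnn (m - x + x %/ k.+1).+1); nia.
Qed.

Theorem mainTheorem3 (r t k : nat) (T : finType) (G blue : rel T) :
  2 <= r -> 2 <= t -> 1 <= k ->
  simple_graph G ->
  (r - 1) * (t - 1) * k < #|T| ->
  let n := #|T| in
  let x := (n + r - 2) %/ (r - 1) in
  n - x + x %/ k.+1 <= min_degree G ->
  blue_colouring G blue ->
  ~ has_path_on blue t ->
  alpha (red_graph G blue) <= x - 1.
Proof.
move=> r_ge2 t_ge2 k_gt0 [_ G_irr] n_big n x deg_big [blue_sym blue_G] no_blue_path.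
have r1_gt0 : 0 < r - 1 by rewrite subn_gt0.
have n_le : n <= x * (r - 1).
  by rewrite /x (_ : n + r - 2 = n + (r - 1) - 1); [apply: leq_mul_ceil_div | lia].
have tk_lt_x : (t - 1) * k < x.
  by rewrite -(ltn_pmul2r r1_gt0) (mulnC _ (r - 1)) mulnA (leq_trans n_big).
have blue_irr : irreflexive blue by move=> u; apply/negP=> /blue_G; rewrite G_irr.
apply/bigmax_leqP=> S S_indep; rewrite leqNgt; apply/negP=> S_big.
have S_deg u : u \in S -> #|S| - x + x %/ k.+1 <= #|[set w in S | blue u w]|.
  move=> uS; have := red_independent_blue_degree S_indep uS.
  have := max_card (mem S); rewrite -/n; lia.
have [|c] := closed_components_card blue_sym blue_irr _
  (no_path_on_uniq_sorted (ltnW t_ge2) no_blue_path) S_deg.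
  by have := leq_doubleS_div k_gt0 tk_lt_x; rewrite -!addnn; lia.
by rewrite -subn1; apply: no_component_count tk_lt_x _; lia.
Qed.
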